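(* Let $\dot{\mathcal H}$ be the point (bound-state) subspace of the Hydrogen atom Hamiltonian as described in the context, and let $0\neq|\psi\rangle\in\dot{\mathcal H}$. Then for each $0<q<1$, $D^+_{\mu_{|\psi\rangle}}(q)\le \tfrac13$.
   Context: The Hydrogen atom Hamiltonian is $H=-\Delta-\kappa/|x|$ acting in $\mathrm{L}^2(\mathbb R^3)$, $\kappa>0$. Its eigenvalues are $\lambda_n=-\Lambda/n^2$, $n=1,2,\dots$, with $\Lambda=\kappa^2/4$, each of multiplicity $n^2$, with orthonormal eigenfunctions $|n,l,m\rangle$, $l=0,\dots,n-1$, $m=-l,\dots,l$. $\dot{\mathcal H}$ denotes the closed subspace spanned by all $|n,l,m\rangle$. For $|\psi\rangle=\sum a_{n,l,m}|n,l,m\rangle\in\dot{\mathcal H}$ its spectral measure is $\mu_{|\psi\rangle}=\sum_{n,l,m}|a_{n,l,m}|^2\delta_{\lambda_n}$. For a finite positive Borel measure $\mu$ on $\mathbb R$ and $q>0$, $q\neq1$, set $I_\mu(q,\epsilon)=\int_{\{x:\mu(B(x,\epsilon))>0\}}\mu(B(x,\epsilon))^{q-1}\,d\mu(x)$ with $B(x,\epsilon)=(x-\epsilon,x+\epsilon)$, and define the upper generalized fractal dimension $D^+_\mu(q)=\limsup_{\epsilon\downarrow0}\frac{\ln I_\mu(q,\epsilon)}{(q-1)\ln\epsilon}$. *)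

From HB Require Import structures.
From mathcomp Require Import all_boot all_order all_algebra.
From mathcomp Require Import all_classical all_reals all_analysis.
From mathcomp Require Import complex.

Set Implicit Arguments.
Unset Strict Implicit.
Unset Printing Implicit Defensive.

Import Order.TTheory GRing.Theory Num.Theory.
Import numFieldTopology.Exports.
Local Open Scope classical_set_scope.
Local Open Scope ring_scope.

(* Eigenvalue lambda_n = - Lambda / n^2 with Lambda = kappa^2/4 (meaningful for n >= 1). *)
Definition hydrogen_eigenvalue (R : realType) (kappa : R) (n : nat) : R :=
  - (kappa ^+ 2 / 4) / (n%:R ^+ 2).

Definition sqnormC (R : realType) (z : R[i]) : R := (@complex.Re R z) ^+ 2 + (@complex.Im R z) ^+ 2.

(* sum over l = 0..n-1, m = -l..l of |a_{n,l,m}|^2 : the total mass the spectral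
   measure of psi puts at lambda_n *)
Definition level_weight (R : realType) (a : nat -> nat -> int -> R[i]) (n : nat) : R :=
  \sum_(l < n) \sum_(0 <= j < (2 * l).+1) sqnormC (a n l (j%:Z - l%:Z)).

Lemma level_weight_ge0 (R : realType) (a : nat -> nat -> int -> R[i]) (n : nat) :
  0 <= level_weight a n.
Proof.
by apply: sumr_ge0 => l _; apply: sumr_ge0 => j _; rewrite /sqnormC addr_ge0 ?sqr_ge0.
Qed.

Definition spectral_measure (R : realType) (kappa : R)
    (a : nat -> nat -> int -> R[i]) : {measure set R -> \bar R} :=
  mseries (fun k => mscale (NngNum (level_weight_ge0 a k.+1))
                           (\d_(hydrogen_eigenvalue kappa k.+1))) 0.

Definition Rball (R : realType) (x eps : R) : set R := `](x - eps), (x + eps)[.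

Definition I_mu (R : realType) (mu : {measure set R -> \bar R}) (q eps : R) : \bar R :=
  (\int[mu]_(x in [set x | (0 < mu (Rball x eps))%E])
      ((fine (mu (Rball x eps))) `^ (q - 1))%:E)%E.

Definition lnE (R : realType) (x : \bar R) : \bar R :=
  match x with
  | r%:E => (ln r)%:E
  | +oo%E => +oo%E
  | -oo%E => -oo%E
  end.

Definition Dplus (R : realType) (mu : {measure set R -> \bar R}) (q : R) : \bar R :=
  limf_esup (fun eps : R => (lnE (I_mu mu q eps) * ((q - 1) * ln eps)^-1%:E)%E)
            (0%R^'+).

From HB Require Import structures.
From mathcomp Require Import all_boot all_order all_algebra.
From mathcomp Require Import all_classical all_reals all_analysis.
From mathcomp Require Import complex.
From mathcomp Require Import ring lra.
From mathcomp Require Import measurable_realfun.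

Set Implicit Arguments.
Unset Strict Implicit.
Unset Printing Implicit Defensive.

Import Order.TTheory GRing.Theory Num.Theory.
Import numFieldTopology.Exports.
Local Open Scope classical_set_scope.
Local Open Scope ring_scope.

(* Put eps = u^3.  The first N ~ 1/u levels lambda_n are far apart, and all the
   others lie in an interval of length ~ kappa^2 u^2 / 4, so the levels can be
   grouped into at most (3 + kappa^2/4)/u blocks of diameter < eps.  The ball
   B(lambda_k, eps) contains the whole block of lambda_k, so its mass is at least
   the mass W of that block, and I_mu(q, eps) <= sum_k w_k W_k^(q-1).  Now
   W^(q-1) <= u^(q-1) + u^q / W, and the w_k / W_k sum to 1 over each block, so
   I_mu(q, eps) <= (#blocks) u^q + |psi|^2 u^(q-1) = O(eps^((q-1)/3)); taking
   logarithms gives D^+(q) <= 1/3. *)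

Lemma le0_ger_powR (R : realType) (p x y : R) :
  p <= 0 -> 0 < x -> x <= y -> y `^ p <= x `^ p.
Proof.
move=> p_le0 x_gt0 xy; rewrite -[p]opprK (powRN y) (powRN x).
rewrite lef_pV2 ?posrE ?powR_gt0 ?(lt_le_trans x_gt0) //.
by apply: ge0_ler_powR; rewrite ?oppr_ge0 // nnegrE ltW // (lt_le_trans x_gt0).
Qed.

Lemma powRB1_le_add (R : realType) (W t q : R) : 0 < W -> 0 < t -> 0 < q <= 1 ->
  W `^ (q - 1) <= t `^ (q - 1) + t `^ q / W.
Proof.
move=> W_gt0 t_gt0 /andP[q_gt0 q_le1]; have q1_le0 : q - 1 <= 0 by rewrite subr_le0.
have [tW|Wt] := leP t W.
  apply: ler_wpDr; last exact: le0_ger_powR.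
  by rewrite divr_ge0 ?powR_ge0 ?ltW.
apply: ler_wpDl; first exact: powR_ge0.
rewrite -[W `^ (q - 1)](mulKf (lt0r_neq0 W_gt0)).
rewrite mulr_powRB1 //; last exact: ltW.
rewrite mulrC ler_pM2r ?invr_gt0 //.
by apply: ge0_ler_powR; rewrite ?nnegrE ?ltW.
Qed.

Lemma nneseries_EFin_le (R : realType) (u : nat -> R) (B : R) :
  (forall k, 0 <= u k) -> (forall P, \sum_(0 <= k < P) u k <= B) ->
  (\sum_(k <oo) (u k)%:E <= B%:E)%E.
Proof.
move=> u_ge0 partial_le; apply: lime_le.
  by apply: is_cvg_nneseries => k _ _; rewrite lee_fin.
by apply: nearW => P; rewrite sumEFin lee_fin.
Qed.

Lemma limf_esup_le (T : choiceType) (X : filteredType T) (R : realType)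
    (f : X -> \bar R) (F : set (set X)) (V : set X) (y : \bar R) :
  F V -> (forall x, V x -> (f x <= y)%E) -> (limf_esup f F <= y)%E.
Proof.
move=> FV f_le; apply: (@le_trans _ _ (ereal_sup (f @` V))).
  by apply: ereal_inf_lbound; exists V.
by apply: ge_ereal_sup => _ [x Vx <-]; exact: f_le.
Qed.

Lemma ln_le_of_le_mul_powR (R : realType) (r C e p : R) :
  0 <= r -> 1 <= C -> 0 < e -> 0 <= p * ln e -> r <= C * e `^ p ->
  ln r <= ln C + p * ln e.
Proof.
move=> r_ge0 C_ge1 e_gt0 pe_ge0 r_le.
have C_gt0 : 0 < C := lt_le_trans ltr01 C_ge1.
have [->|r_neq0] := eqVneq r 0.
  by rewrite ln0 //; apply: addr_ge0 => //; exact: ln_ge0.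
have r_gt0 : 0 < r by rewrite lt_def r_neq0.
by rewrite -ln_powR -lnM ?posrE ?powR_gt0 // ler_ln ?posrE ?mulr_gt0 ?powR_gt0.
Qed.

Definition block_mass {R : realType} (w : nat -> R) (bl : nat -> nat) (P b : nat) : R :=
  \sum_(0 <= j < P | bl j == b) w j.

Section BlockSums.
Variables (R : realType) (w : nat -> R) (bl : nat -> nat) (P Kb : nat).
Hypotheses (w_ge0 : forall k, 0 <= w k) (bl_lt : forall k, (bl k < Kb)%N).

Lemma block_mass_ge {k} : (k < P)%N -> w k <= block_mass w bl P (bl k).
Proof.
move=> kP; rewrite /block_mass big_mkcond /= (bigD1_seq k) ?mem_index_iota ?iota_uniq //=.
by rewrite eqxx lerDl sumr_ge0 // => i _; case: ifP.
Qed.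

Lemma sum_div_block_mass_le :
  \sum_(0 <= k < P) w k / block_mass w bl P (bl k) <= Kb%:R.
Proof.
rewrite (partition_big (fun k => Ordinal (bl_lt k)) xpredT) //=.
rewrite -[Kb in X in _ <= X]card_ord -sumr_const; apply: ler_sum => b _.
rewrite (eq_bigl (fun k => bl k == b)) => [|k]; last by rewrite -val_eqE.
rewrite (eq_bigr (fun k => w k / block_mass w bl P b)) => [|k /eqP-> //].
rewrite -big_distrl /= -/(block_mass w bl P b).
have [->|Wn0] := eqVneq (block_mass w bl P b) 0; first by rewrite invr0 mulr0.
by rewrite divff.
Qed.

Lemma sum_mul_block_powRB1_le (h : nat -> R) (q t : R) : 0 < q <= 1 -> 0 < t ->
  (forall k, (k < P)%N -> 0 < w k -> h k <= block_mass w bl P (bl k) `^ (q - 1)) ->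
  \sum_(0 <= k < P) w k * h k <= Kb%:R * t `^ q + (\sum_(0 <= k < P) w k) * t `^ (q - 1).
Proof.
move=> q01 t0 h_le.
apply: (@le_trans _ _ (\sum_(0 <= k < P)
    (w k * t `^ (q - 1) + w k / block_mass w bl P (bl k) * t `^ q))).
  rewrite big_nat [X in _ <= X]big_nat; apply: ler_sum => k /andP[_ kP].
  have [->|wk_neq0] := eqVneq (w k) 0; first by rewrite !mul0r add0r.
  have wk_gt0 : 0 < w k by rewrite lt_def wk_neq0 w_ge0.
  have W_gt0 := lt_le_trans wk_gt0 (block_mass_ge kP).
  rewrite mulrAC -mulrA -mulrDr ler_pM2l // (le_trans (h_le k kP wk_gt0)) //.
  exact: powRB1_le_add.
rewrite big_split /= -!big_distrl /= addrC lerD2r ler_wpM2r ?powR_ge0 //.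
exact: sum_div_block_mass_le.
Qed.

End BlockSums.

Lemma bucket_labeling (R : realType) (g : nat -> R) (N : nat) (eps : R) :
  0 < eps -> (forall k, (N <= k)%N -> 0 <= g k <= g N) ->
  exists bl : nat -> nat,
    (forall k, (bl k < N + (Num.trunc (g N / eps)).+1)%N) /\
    (forall j k, bl j = bl k -> `|g j - g k| < eps).
Proof.
move=> eps_gt0 g_tail.
pose x k := (g N - g k) / eps.
have x_itv k : (N <= k)%N -> 0 <= x k <= g N / eps.
  move=> /g_tail /andP[gk0 gkN].
  by rewrite /x divr_ge0 ?subr_ge0 ?(ltW eps_gt0) //= ler_pM2r ?invr_gt0 // lerBlDr lerDl.
exists (fun k => if (k < N)%N then k else (N + Num.trunc (x k))%N); split.
  move=> k; case: ifPn => [kN|]; first by rewrite (leq_trans kN) ?leq_addr.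
  rewrite -leqNgt => /x_itv /andP[x0 xN].
  by rewrite ltn_add2l ltnS le_truncn.
move=> j k; case: ifPn => [jN|]; case: ifPn => [kN|] //.
- by move=> ->; rewrite subrr normr0.
- by move=> _ jk; move: jN; rewrite jk ltnNge leq_addr.
- by move=> _ jk; move: kN; rewrite -jk ltnNge leq_addr.
rewrite -!leqNgt => /x_itv/andP[xk0 _] /x_itv/andP[xj0 _] /addnI jk.
have := truncn_itv xj0; have := truncn_itv xk0; rewrite jk.
move=> /andP[k_lb k_ub] /andP[j_lb j_ub].
have xjk : `|x k - x j| < 1 by rewrite ltr_norml; apply/andP; split; lra.
have -> : g j - g k = (x k - x j) * eps by rewrite /x -mulrBl divfK ?gt_eqF //; ring.
by rewrite normrM (gtr0_norm eps_gt0) -ltr_pdivlMr // divff ?gt_eqF.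
Qed.

Lemma hydrogen_level_blocks (R : realType) (kappa u : R) : 0 < u <= 1 ->
  exists (bl : nat -> nat) (Kb : nat),
  [/\ forall k, (bl k < Kb)%N,
      forall j k, bl j = bl k ->
        `|hydrogen_eigenvalue kappa j.+1 - hydrogen_eigenvalue kappa k.+1| < u ^+ 3 &
      Kb%:R * u <= 3 + kappa ^+ 2 / 4].
Proof.
move=> /andP[u_gt0 u_le1].
set L := kappa ^+ 2 / 4; have L_ge0 : 0 <= L by rewrite divr_ge0 ?sqr_ge0.
pose g k := L / k.+1%:R ^+ 2.
have g_ge0 k : 0 <= g k by rewrite divr_ge0 ?sqr_ge0.
set N := (Num.trunc u^-1).+1.
have g_tail k : (N <= k)%N -> 0 <= g k <= g N.
  move=> Nk; rewrite g_ge0 ler_wpM2l // lef_pV2 ?posrE ?exprn_gt0 ?ltr0Sn //.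
  by rewrite lerXn2r ?nnegrE // ler_nat.
have u3_gt0 : 0 < u ^+ 3 by rewrite exprn_gt0.
have [bl [bl_lt bl_diam]] := bucket_labeling u3_gt0 g_tail.
exists bl, (N + (Num.trunc (g N / u ^+ 3)).+1)%N; split => //.
  by move=> j k /bl_diam; rewrite /hydrogen_eigenvalue !mulNr -opprD normrN.
have N_le : N%:R <= u^-1 + 1.
  by rewrite /N -addn1 natrD lerD2r truncn_le invr_ge0 ltW.
have uN_ge1 : 1 <= N.+1%:R * u.
  rewrite -ler_pdivrMr // mul1r -addn1 natrD ler_wpDr ?ler01 // ltW //.
  by rewrite /N truncnS_gt.
have gN_le : g N / u ^+ 3 * u <= L.
  have -> : g N / u ^+ 3 * u = L / (N.+1%:R * u) ^+ 2.
    by rewrite /g exprMn invfM; field; rewrite ?gt_eqF ?ltr0Sn.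
  rewrite ler_pdivrMr ?exprn_gt0 ?(lt_le_trans ltr01) // ler_peMr //.
  by rewrite exprn_ege1.
have T_le : (Num.trunc (g N / u ^+ 3))%:R <= g N / u ^+ 3.
  by rewrite truncn_le divr_ge0 ?g_ge0 ?ltW.
rewrite natrD -addn1 natrD !mulrDl mul1r.
have Nu_le : N%:R * u <= 2.
  apply: le_trans (ler_wpM2r (ltW u_gt0) N_le) _.
  by rewrite mulrDl mulVf ?gt_eqF // mul1r; lra.
have := le_trans (ler_wpM2r (ltW u_gt0) T_le) gN_le.
lra.
Qed.

Lemma Dplus_le_of_I_mu_le (R : realType) (mu : {measure set R -> \bar R})
    (q C alpha : R) :
  q < 1 -> 1 <= C -> 0 <= alpha ->
  (forall eps, 0 < eps < 1 -> (I_mu mu q eps <= (C * eps `^ (alpha * (q - 1)))%:E)%E) ->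
  (Dplus mu q <= alpha%:E)%E.
Proof.
move=> q_lt1 C_ge1 alpha_ge0 I_le; apply/lee_addgt0Pr => d d_gt0.
pose r0 := expR (- (ln C / (d * (1 - q)))).
have r0_le1 : r0 <= 1.
  by rewrite -expR0 ler_expR oppr_le0 divr_ge0 ?ln_ge0 // mulr_ge0 ?subr_ge0 ?ltW.
apply: (@limf_esup_le _ _ _ _ _ [set e | 0 < e < r0]).
  near=> e; apply/andP; split; near: e; first exact: nbhs_right_gt.
  exact/nbhs_right_lt/expR_gt0.
move=> e /andP[e_gt0 e_lt_r0]; have e_lt1 := lt_le_trans e_lt_r0 r0_le1.
have I_ge0 : (0 <= I_mu mu q e)%E by apply: integral_ge0 => x _; rewrite lee_fin powR_ge0.
have I_le_e := I_le e (andb_true_intro (conj e_gt0 e_lt1)).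
have I_fin : I_mu mu q e \is a fin_num.
  by rewrite ge0_fin_numE // (le_lt_trans I_le_e) ?ltry.
have r_ge0 : 0 <= fine (I_mu mu q e) := fine_ge0 I_ge0.
rewrite -(fineK I_fin) lee_fin in I_le_e; rewrite -(fineK I_fin).
set r := fine (I_mu mu q e) in r_ge0 I_le_e *.
rewrite /= -EFinM -EFinD lee_fin; set l := (q - 1) * ln e.
have l_gt0 : 0 < l.
  by rewrite /l -mulrNN mulr_gt0 // oppr_gt0 ?subr_lt0 // ln_lt0 // e_gt0.
have ln_r_le : ln r <= ln C + alpha * l.
  by rewrite mulrA ln_le_of_le_mul_powR // -mulrA mulr_ge0 // ltW.
have lnC_le : ln C <= d * l.
  have -> : d * l = - ln e * (d * (1 - q)) by rewrite /l; ring.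
  by apply: ltW; rewrite -ltr_pdivrMr ?mulr_gt0 ?subr_gt0 // ltrNr -ltr_expR lnK //.
by rewrite ler_pdivrMr // mulrDl; lra.
Unshelve. all: by end_near.
Qed.

Lemma Rball_sym (R : realType) (x y eps : R) : (y \in Rball x eps) = (x \in Rball y eps).
Proof.
rewrite /Rball !mem_setE !in_itv /=.
by apply/idP/idP => /andP[? ?]; apply/andP; split; lra.
Qed.

Section SpectralMeasure.
Variables (R : realType) (kappa : R) (a : nat -> nat -> int -> R[i]).
Let mu := spectral_measure kappa a.
Let w k := level_weight a k.+1.
Let lam k := hydrogen_eigenvalue kappa k.+1.

Let w_ge0 k : 0 <= w k. Proof. exact: level_weight_ge0. Qed.

Lemma spectral_measureE A :
  mu A = (\sum_(k <oo) (w k)%:E * (\1_A (lam k))%:E)%E.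
Proof. by []. Qed.

Lemma spectral_measure_ballE eps x :
  mu (Rball x eps) = (\sum_(k <oo) (w k)%:E * (\1_(Rball (lam k) eps) x)%:E)%E.
Proof.
by rewrite spectral_measureE; apply: eq_eseriesr => k _; rewrite !indicE Rball_sym.
Qed.

Lemma spectral_measure_le_total A : (mu A <= \sum_(k <oo) (w k)%:E)%E.
Proof.
rewrite spectral_measureE; apply: lee_nneseries => k _.
  by rewrite -EFinM lee_fin mulr_ge0.
by rewrite -EFinM lee_fin indicE ler_piMr //; case: (_ \in _).
Qed.

Lemma measurable_spectral_ball eps :
  measurable_fun [set: R] (fun x => mu (Rball x eps)).
Proof.
under eq_fun do rewrite spectral_measure_ballE.
apply: ge0_emeasurable_sum => [k x _ _|k _].
  by rewrite -EFinM lee_fin mulr_ge0.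
apply/measurable_EFinP; apply: measurable_funM => //.
by apply: measurable_indic; exact: measurable_itv.
Qed.

Lemma I_mu_spectralE q eps : I_mu mu q eps =
  (\sum_(k <oo) (w k * (\1_[set x | (0 < mu (Rball x eps))%E] (lam k)
                        * fine (mu (Rball (lam k) eps)) `^ (q - 1)))%:E)%E.
Proof.
set D := [set x | _].
pose f x := (fine (mu (Rball x eps)) `^ (q - 1))%:E.
have mD : measurable D.
  by rewrite -[D]setTI; exact: measurable_lte (measurable_spectral_ball eps).
have mf : measurable_fun [set: R] f.
  apply/measurable_EFinP => /=.
  change (measurable_fun [set: R]
    ((fun y : R => y `^ (q - 1)) \o (fine \o (fun x => mu (Rball x eps))))).
  apply: measurableT_comp; first exact: measurable_powR.
  apply: measurableT_comp; first exact: fine_measurable.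
  exact: measurable_spectral_ball.
have mfD := measurable_funS measurableT (subsetT D) mf.
have f_ge0 x : D x -> (0 <= f x)%E by rewrite lee_fin powR_ge0.
rewrite [I_mu _ _ _](_ : _ = \int[mu]_(x in D) f x)%E // {1}/mu /spectral_measure.
rewrite ge0_integral_measure_series //; apply: eq_eseriesr => k _.
by rewrite ge0_integral_mscale // integral_dirac // diracE -!EFinM.
Qed.

Lemma block_mass_le_spectral_ball (bl : nat -> nat) (eps : R) P k :
  (forall j, bl j = bl k -> `|lam j - lam k| < eps) ->
  ((block_mass w bl P (bl k))%:E <= mu (Rball (lam k) eps))%E.
Proof.
move=> bl_diam; rewrite spectral_measureE.
have term_ge0 j : (0 <= (w j)%:E * (\1_(Rball (lam k) eps) (lam j))%:E)%E.
  by rewrite -EFinM lee_fin mulr_ge0.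
apply: le_trans (nneseries_lim_ge P (fun j _ _ => term_ge0 j)).
under eq_bigr do rewrite -EFinM.
rewrite sumEFin lee_fin /block_mass big_mkcond /=; apply: ler_sum => j _.
case: eqP => [/bl_diam|_]; last by rewrite indicE mulr_ge0 //; case: (_ \in _).
rewrite ltr_norml => /andP[lo hi].
by rewrite indicE mem_set ?mulr1 // /Rball /= in_itv /=; apply/andP; split; lra.
Qed.

Lemma I_mu_spectral_le (q u M : R) : 0 < q < 1 -> 0 < u <= 1 ->
  (\sum_(k <oo) (w k)%:E)%E = M%:E ->
  (I_mu mu q (u ^+ 3) <= ((3 + kappa ^+ 2 / 4 + M) * u `^ (q - 1))%:E)%E.
Proof.
move=> /andP[q_gt0 q_lt1] u01 sum_w; have u_gt0 : 0 < u by case/andP: u01.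
have q01 : 0 < q <= 1 by rewrite q_gt0 ltW.
have [bl [Kb [bl_lt bl_diam Kb_le]]] := hydrogen_level_blocks kappa u01.
rewrite I_mu_spectralE; apply: nneseries_EFin_le => [k|P].
  by rewrite mulr_ge0 ?mulr_ge0 ?powR_ge0 // indicE; case: (_ \in _).
apply: le_trans (sum_mul_block_powRB1_le w_ge0 bl_lt q01 u_gt0 _) _.
  move=> k kP wk_gt0.
  have W_gt0 := lt_le_trans wk_gt0 (block_mass_ge bl w_ge0 kP).
  have W_le := block_mass_le_spectral_ball P (fun j => bl_diam j k).
  set F := mu (Rball (lam k) (u ^+ 3)) in W_le *.
  have F_fin : F \is a fin_num.
    rewrite ge0_fin_numE ?measure_ge0 //.
    by rewrite (le_lt_trans (spectral_measure_le_total _)) // sum_w ltry.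
  rewrite -(fineK F_fin) lee_fin in W_le.
  rewrite indicE mem_set /=; last first.
    by rewrite -/F -(fineK F_fin) lte_fin (lt_le_trans W_gt0).
  by rewrite mul1r le0_ger_powR // subr_le0 ltW.
have sum_w_le : \sum_(0 <= k < P) w k <= M.
  by rewrite -lee_fin -sum_w -sumEFin; apply: nneseries_lim_ge => k _ _; rewrite lee_fin.
rewrite -(mulr_powRB1 (ltW u_gt0) q_gt0) mulrA -mulrDl ler_wpM2r ?powR_ge0 //.
exact: lerD.
Qed.

End SpectralMeasure.

Theorem proposition1 (R : realType) (kappa : R) (a : nat -> nat -> int -> R[i]) :
  0 < kappa ->
  (\sum_(k <oo) (level_weight a k.+1)%:E < +oo)%E ->
  (exists (n l : nat) (m : int),
      [/\ (0 < n)%N, (l < n)%N, (`|m| <= l)%N & a n l m != 0]) ->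
  forall q : R, 0 < q < 1 ->
    (Dplus (spectral_measure kappa a) q <= (1 / 3)%:E)%E.
Proof.
move=> _ sum_fin _ q q01; have q_lt1 : q < 1 by case/andP: q01.
have sum_ge0 : (0 <= \sum_(k <oo) (level_weight a k.+1)%:E)%E.
  by apply: nneseries_ge0 => k _ _; rewrite lee_fin level_weight_ge0.
set M := fine (\sum_(k <oo) (level_weight a k.+1)%:E)%E.
have sum_w : (\sum_(k <oo) (level_weight a k.+1)%:E)%E = M%:E.
  by rewrite fineK // ge0_fin_numE.
have M_ge0 : 0 <= M by rewrite fine_ge0.
have L_ge0 : 0 <= kappa ^+ 2 / 4 by rewrite divr_ge0 ?sqr_ge0.
apply: (@Dplus_le_of_I_mu_le _ _ _ (3 + kappa ^+ 2 / 4 + M)) => //; first lra.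
move=> eps /andP[eps_gt0 eps_lt1]; set u := eps `^ (1 / 3).
have eps_E : eps = u ^+ 3.
  by rewrite -powR_mulrn ?powR_ge0 // -powRrM mul1r mulVf ?pnatr_eq0 // powRr1 // ltW.
have u01 : 0 < u <= 1.
  by rewrite powR_gt0 //= -(@expr_le1 _ 3) ?powR_ge0 // -eps_E ltW.
by rewrite {1}eps_E powRrM; exact: I_mu_spectral_le.
Qed.
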